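(* For every $s\in[0,1]$, $$\{(g(s,x),h(s,x)):x\in[a,b]\}=\{(x,w(x)+s\varphi(x)):x\in[a,b]\}.$$
   Context: Let $w\in C^3(\mathbb R)$ be periodic with $w>0$ on $[-1,1]$. Let $-1<a<b<1$ and let $\varphi:[a,b]\to\mathbb R$ be a polynomial with $\varphi^{(k)}(a)=\varphi^{(k)}(b)=0$ for $k=0,1,2,3$, extended by zero outside $[a,b]$. For $x\in\mathbb R$, $(\xi(t,x),\eta(t,x))$ is the unique global solution of $$\frac{d\xi}{dt}=-w'(\xi)\varphi(\xi)-(\eta-w(\xi))\varphi'(\xi),\quad\frac{d\eta}{dt}=\varphi(\xi),\quad \xi(0)=x,\ \eta(0)=w(x).$$ For $s\in[0,1]$, $t_0(s,x)\ge0$ denotes the first time $t\ge0$ with $\eta(t,x)=w(\xi(t,x))+s\varphi(\xi(t,x))$ (it exists). Set $g(s,x)=\xi(t_0(s,x),x)$ and $h(s,x)=\eta(t_0(s,x),x)$. *)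

From Stdlib Require Import Reals List.
Open Scope R_scope.

(* Evaluation of the real polynomial with coefficient list [c0; c1; ...]
   (c0 + c1 x + c2 x^2 + ...). *)
Definition poly_eval (l : list R) (x : R) : R :=
  fold_right (fun c acc => c + x * acc) 0 l.

From Stdlib Require Import Reals List Lra Psatz.
Open Scope R_scope.

(* Write [gap = eta - w(xi)].  Along the flow the ratio [gap / phi(xi)] has derivative
   [1 + (xi' / phi(xi))^2] and vanishes at time 0, so it is at least [t] as long as [phi(xi)]
   keeps its sign, while it stays below [s <= 1] before the crossing time [t0].  Hence
   [t0 <= 1], and [phi(xi)] cannot vanish before [t0]: at a first zero, [|gap| <= |phi(xi)|]
   would make the state an equilibrium, which no other trajectory reaches (Gronwall).  The
   crossing is therefore transversal, so [t0(s, .)] is continuous where [phi <> 0], while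
   zeros of [phi] are stationary points.  As the field vanishes off [[a, b]], the map
   [g(s, .)] is a continuous self-map of [[a, b]] fixing [a] and [b], hence onto. *)

Lemma derivable_pt_lim_plus_eq f g x lf lg l :
  derivable_pt_lim f x lf -> derivable_pt_lim g x lg ->
  l = lf + lg -> derivable_pt_lim (fun t => f t + g t) x l.
Proof. intros Hf Hg ->. exact (derivable_pt_lim_plus f g x lf lg Hf Hg). Qed.

Lemma derivable_pt_lim_minus_eq f g x lf lg l :
  derivable_pt_lim f x lf -> derivable_pt_lim g x lg ->
  l = lf - lg -> derivable_pt_lim (fun t => f t - g t) x l.
Proof. intros Hf Hg ->. exact (derivable_pt_lim_minus f g x lf lg Hf Hg). Qed.

Lemma derivable_pt_lim_mult_eq f g x lf lg l :
  derivable_pt_lim f x lf -> derivable_pt_lim g x lg ->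
  l = lf * g x + f x * lg -> derivable_pt_lim (fun t => f t * g t) x l.
Proof. intros Hf Hg ->. exact (derivable_pt_lim_mult f g x lf lg Hf Hg). Qed.

Lemma derivable_pt_lim_comp_eq f g x lf lg l :
  derivable_pt_lim f x lf -> derivable_pt_lim g (f x) lg ->
  l = lg * lf -> derivable_pt_lim (fun t => g (f t)) x l.
Proof. intros Hf Hg ->. exact (derivable_pt_lim_comp f g x lf lg Hf Hg). Qed.

Lemma derivable_pt_lim_div_eq f g x lf lg l :
  derivable_pt_lim f x lf -> derivable_pt_lim g x lg -> g x <> 0 ->
  l = (lf * g x - lg * f x) / (g x)² -> derivable_pt_lim (fun t => f t / g t) x l.
Proof. intros Hf Hg Hg0 ->. exact (derivable_pt_lim_div f g x lf lg Hf Hg Hg0). Qed.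

Lemma derivable_pt_lim_const_eq c x l : l = 0 -> derivable_pt_lim (fun _ => c) x l.
Proof. intros ->. exact (derivable_pt_lim_const c x). Qed.

Lemma derivable_pt_lim_mult_const f c x l :
  derivable_pt_lim f x l -> derivable_pt_lim (fun t => f t * c) x (l * c).
Proof.
  intros Hf. apply derivable_pt_lim_mult_eq with (lf := l) (lg := 0); auto.
  - apply derivable_pt_lim_const.
  - ring.
Qed.

Lemma derivable_pt_lim_exp_scal k x :
  derivable_pt_lim (fun t => exp (k * t)) x (exp (k * x) * k).
Proof.
  apply derivable_pt_lim_comp_eq with (lf := k) (lg := exp (k * x));
    [| apply derivable_pt_lim_exp | ring].
  apply derivable_pt_lim_mult_eq with (f := fun _ => k) (g := fun t => t) (lf := 0) (lg := 1);
    [apply derivable_pt_lim_const | apply derivable_pt_lim_id | ring].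
Qed.

Lemma derivable_pt_lim_continuity_pt f f' x :
  derivable_pt_lim f x (f' x) -> continuity_pt f x.
Proof. intros Hf. apply derivable_continuous_pt. exists (f' x). exact Hf. Qed.

Definition continuous_on (f : R -> R) (p q : R) : Prop :=
  forall t, p <= t <= q -> forall eps, 0 < eps -> exists del, 0 < del /\
    forall t', p <= t' <= q -> Rabs (t' - t) < del -> Rabs (f t' - f t) < eps.

Lemma continuity_pt_continuous_on f p q :
  (forall t, p <= t <= q -> continuity_pt f t) -> continuous_on f p q.
Proof.
  intros Hf t Ht eps Heps. destruct (Hf t Ht eps Heps) as [del [Hdel Hclose]].
  exists del; split; auto. intros t' _ Hd.
  destruct (Req_dec t' t) as [->|Hne].
  - rewrite Rminus_diag, Rabs_R0; lra.
  - exact (Hclose t' (conj (conj I (not_eq_sym Hne)) Hd)).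
Qed.

Lemma derivable_continuous_on f f' p q :
  (forall t, derivable_pt_lim f t (f' t)) -> continuous_on f p q.
Proof.
  intros Hf. apply continuity_pt_continuous_on. intros t _.
  exact (derivable_pt_lim_continuity_pt f f' t (Hf t)).
Qed.

Lemma continuous_on_opp f p q : continuous_on f p q -> continuous_on (fun t => - f t) p q.
Proof.
  intros Hf t Ht eps Heps. destruct (Hf t Ht eps Heps) as [del [Hdel Hclose]].
  exists del; split; auto. intros t' Ht' Hd.
  replace (- f t' - - f t) with (- (f t' - f t)) by ring. rewrite Rabs_Ropp. auto.
Qed.

Lemma continuous_on_reflect f p q :
  continuous_on f p q -> continuous_on (fun u => f (- u)) (- q) (- p).
Proof.
  intros Hf t Ht eps Heps. destruct (Hf (- t) ltac:(lra) eps Heps) as [del [Hdel Hclose]].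
  exists del; split; auto. intros t' Ht' Hd. apply Hclose; [lra|].
  replace (- t' - - t) with (- (t' - t)) by ring. rewrite Rabs_Ropp. exact Hd.
Qed.

Lemma last_crossing f p q c : p < q -> continuous_on f p q -> c <= f p -> f q < c ->
  exists r, p <= r < q /\ f r = c /\ forall t, r < t <= q -> f t < c.
Proof.
  intros Hpq Hf Hp Hq.
  set (E := fun t => p <= t <= q /\ c <= f t).
  assert (HE_bound : bound E) by (exists q; intros t [Ht _]; lra).
  assert (HE_inhabited : exists t, E t) by (exists p; split; lra).
  destruct (completeness E HE_bound HE_inhabited) as [r [Hub Hlub]].
  assert (Hpr : p <= r) by (apply Hub; split; lra).
  assert (Hrq : r <= q) by (apply Hlub; intros t [Ht _]; lra).
  assert (Hafter : forall t, r < t <= q -> f t < c).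
  { intros t Ht. destruct (Rlt_le_dec (f t) c) as [h|h]; auto.
    assert (t <= r) by (apply Hub; split; lra). lra. }
  assert (Hfr : c <= f r).
  { destruct (Rle_lt_dec c (f r)) as [h|h]; auto.
    destruct (Hf r ltac:(lra) (c - f r) ltac:(lra)) as [d [Hd Hclose]].
    assert (Hub' : is_upper_bound E (r - d / 2)).
    { intros t [Ht Hft]. destruct (Rle_lt_dec t (r - d / 2)) as [h2|h2]; auto.
      assert (t <= r) by (apply Hub; split; auto).
      assert (Hx := Hclose t ltac:(lra) ltac:(rewrite Rabs_left1; lra)).
      apply Rabs_def2 in Hx. lra. }
    assert (Hl := Hlub _ Hub'). lra. }
  assert (Hrq' : r < q) by (destruct (Req_dec r q); subst; lra).
  exists r; split; [lra | split; auto].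
  destruct (Req_dec (f r) c) as [h|h]; auto.
  destruct (Hf r ltac:(lra) (f r - c) ltac:(lra)) as [d [Hd Hclose]].
  set (t := Rmin (r + d / 2) q).
  assert (Ht1 : r < t <= q) by (unfold t, Rmin; destruct (Rle_dec _ _); lra).
  assert (Ht2 : t - r <= d / 2) by (unfold t, Rmin; destruct (Rle_dec _ _); lra).
  assert (Hx := Hclose t ltac:(lra) ltac:(rewrite Rabs_right; lra)).
  apply Rabs_def2 in Hx. assert (Hft := Hafter t Ht1). lra.
Qed.

Lemma first_crossing f p q c : p < q -> continuous_on f p q -> c < f p -> f q <= c ->
  exists r, p < r <= q /\ f r = c /\ forall t, p <= t < r -> c < f t.
Proof.
  intros Hpq Hf Hp Hq.
  destruct (last_crossing (fun u => - f (- u)) (- q) (- p) (- c)) as [r [Hr [Hfr Hafter]]].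
  - lra.
  - apply continuous_on_opp, continuous_on_reflect, Hf.
  - rewrite Ropp_involutive; lra.
  - rewrite Ropp_involutive; lra.
  - exists (- r). split; [lra | split; [lra |]].
    intros t Ht. assert (H := Hafter (- t) ltac:(lra)). rewrite Ropp_involutive in H. lra.
Qed.

Lemma IVT_continuous_on f p q : p <= q -> continuous_on f p q -> f p <= 0 -> 0 <= f q ->
  exists r, p <= r <= q /\ f r = 0.
Proof.
  intros Hpq Hf Hp Hq.
  destruct (Req_dec (f q) 0) as [h|h]; [exists q; split; [lra | auto] |].
  destruct (Req_dec (f p) 0) as [h'|h']; [exists p; split; [lra | auto] |].
  assert (Hpq' : p < q) by (destruct (Req_dec p q); subst; lra).
  destruct (last_crossing (fun t => - f t) p q 0 Hpq') as [r [Hr [Hfr _]]];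
    [apply continuous_on_opp, Hf | lra | lra |].
  exists r; split; lra.
Qed.

Lemma continuous_on_nonneg_right_end f p r : p < r -> continuous_on f p r ->
  (forall t, p <= t < r -> 0 <= f t) -> 0 <= f r.
Proof.
  intros Hpr Hf H. destruct (Rle_lt_dec 0 (f r)) as [h|h]; auto.
  destruct (Hf r ltac:(lra) (- f r) ltac:(lra)) as [d [Hd Hclose]].
  set (t := Rmax (r - d / 2) p).
  assert (Ht1 : p <= t < r) by (unfold t, Rmax; destruct (Rle_dec _ _); lra).
  assert (Ht2 : r - t <= d / 2) by (unfold t, Rmax; destruct (Rle_dec _ _); lra).
  assert (Hx := Hclose t ltac:(lra) ltac:(rewrite Rabs_left; lra)).
  apply Rabs_def2 in Hx. assert (H' := H t Ht1). lra.
Qed.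

Definition bounded_lipschitz_on (f : R -> R) (p q M L : R) : Prop :=
  0 <= M /\ 0 <= L /\ forall x y, p <= x <= q -> p <= y <= q ->
    Rabs (f x) <= M /\ Rabs (f x - f y) <= L * Rabs (x - y).

Lemma continuity_bounded_on f p q : p <= q -> (forall t, p <= t <= q -> continuity_pt f t) ->
  exists M, 0 <= M /\ forall t, p <= t <= q -> Rabs (f t) <= M.
Proof.
  intros Hpq Hf.
  destruct (continuity_ab_maj (fun t => Rabs (f t)) p q Hpq) as [m [Hm _]].
  { intros t Ht. apply (continuity_pt_comp f Rabs); [apply Hf; auto | apply Rcontinuity_abs]. }
  exists (Rabs (f m)). split; [apply Rabs_pos | exact Hm].
Qed.

Lemma C1_bounded_lipschitz_on f f' p q : p <= q ->
  (forall x, derivable_pt_lim f x (f' x)) -> (forall x, p <= x <= q -> continuity_pt f' x) ->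
  exists M L, bounded_lipschitz_on f p q M L.
Proof.
  intros Hpq Hf Hf'.
  destruct (continuity_bounded_on f p q Hpq) as [M [HM0 HM]].
  { intros t _. exact (derivable_pt_lim_continuity_pt f f' t (Hf t)). }
  destruct (continuity_bounded_on f' p q Hpq Hf') as [L [HL0 HL]].
  exists M, L. split; [auto | split; [auto |]]. intros x y Hx Hy. split; auto.
  assert (Hlt : forall x y, p <= x <= q -> p <= y <= q -> x < y ->
            Rabs (f x - f y) <= L * Rabs (x - y)).
  { clear x y Hx Hy. intros x y Hx Hy Hxy.
    destruct (MVT_cor2 f f' x y Hxy (fun c _ => Hf c)) as [c [Heq Hc]].
    rewrite <- Rabs_Ropp, Ropp_minus_distr, Heq, Rabs_mult, <- (Rabs_Ropp (x - y)),
      Ropp_minus_distr.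
    apply Rmult_le_compat_r; [apply Rabs_pos | apply HL; lra]. }
  destruct (Rtotal_order x y) as [h|[h|h]].
  - auto.
  - subst. rewrite !Rminus_diag, Rabs_R0. lra.
  - rewrite <- Rabs_Ropp, Ropp_minus_distr, <- (Rabs_Ropp (x - y)), Ropp_minus_distr. auto.
Qed.

Lemma derivable_pt_lim_locally_eq f g x lf lg d : 0 < d ->
  (forall h, Rabs h < d -> f (x + h) = g (x + h)) ->
  derivable_pt_lim f x lf -> derivable_pt_lim g x lg -> lf = lg.
Proof.
  intros Hd Heq Hf Hg. apply (uniqueness_limite g x lf lg); auto.
  intros eps Heps. destruct (Hf eps Heps) as [del Hdel].
  assert (Hm : 0 < Rmin del d) by (apply Rmin_pos; [apply cond_pos | auto]).
  exists (mkposreal _ Hm). intros h Hh0 Hh. simpl in Hh.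
  assert (Hfx : f x = g x) by (rewrite <- (Rplus_0_r x); apply Heq; rewrite Rabs_R0; auto).
  rewrite <- Heq, <- Hfx.
  - apply Hdel; auto. apply Rlt_le_trans with (1 := Hh). apply Rmin_l.
  - apply Rlt_le_trans with (1 := Hh). apply Rmin_r.
Qed.

Lemma derivable_pt_lim_flat_accumulation f x l :
  (forall del, 0 < del -> exists h, h <> 0 /\ Rabs h < del /\ f (x + h) = f x) ->
  derivable_pt_lim f x l -> l = 0.
Proof.
  intros Hflat Hf. destruct (Req_dec l 0) as [h|h]; auto.
  destruct (Hf (Rabs l) (Rabs_pos_lt _ h)) as [del Hdel].
  destruct (Hflat del (cond_pos del)) as [k [Hk0 [Hk Hfk]]].
  assert (X := Hdel k Hk0 Hk). rewrite Hfk in X.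
  replace ((f x - f x) / k - l) with (- l) in X by (field; auto).
  rewrite Rabs_Ropp in X. lra.
Qed.

Lemma derivable_pt_lim_flat_left f x l d : 0 < d ->
  (forall h, - d < h < 0 -> f (x + h) = f x) -> derivable_pt_lim f x l -> l = 0.
Proof.
  intros Hd Hconst. apply derivable_pt_lim_flat_accumulation. intros del Hdel.
  assert (Hm : 0 < Rmin del d) by (apply Rmin_pos; auto).
  assert (Rmin del d <= del) by apply Rmin_l. assert (Rmin del d <= d) by apply Rmin_r.
  exists (- Rmin del d / 2). split; [lra | split].
  - rewrite Rabs_left; lra.
  - apply Hconst. lra.
Qed.

Lemma derivable_pt_lim_flat_right f x l d : 0 < d ->
  (forall h, 0 < h < d -> f (x + h) = f x) -> derivable_pt_lim f x l -> l = 0.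
Proof.
  intros Hd Hconst. apply derivable_pt_lim_flat_accumulation. intros del Hdel.
  assert (Hm : 0 < Rmin del d) by (apply Rmin_pos; auto).
  assert (Rmin del d <= del) by apply Rmin_l. assert (Rmin del d <= d) by apply Rmin_r.
  exists (Rmin del d / 2). split; [lra | split].
  - rewrite Rabs_right; lra.
  - apply Hconst. lra.
Qed.

Lemma nonpos_derivative_le h h' t : 0 <= t ->
  (forall u, derivable_pt_lim h u (h' u)) -> (forall u, 0 <= u <= t -> h' u <= 0) ->
  h t <= h 0.
Proof.
  intros Ht Hh Hneg. destruct (Req_dec t 0) as [->|Hne]; [lra |].
  destruct (MVT_cor2 h h' 0 t ltac:(lra) (fun c _ => Hh c)) as [c [Heq Hc]].
  assert (h' c <= 0) by (apply Hneg; lra). nra.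
Qed.

Lemma gronwall_two_sided E E' c T : 0 <= c ->
  (forall t, derivable_pt_lim E t (E' t)) -> (forall t, 0 <= E t) ->
  (forall t, 0 <= t <= T -> Rabs (E' t) <= c * E t) ->
  forall t, 0 <= t <= T -> E t <= E 0 * exp (c * T) /\ E 0 <= E t * exp (c * T).
Proof.
  intros Hc HE HE0 Hbound t Ht.
  assert (Hup : forall u, 0 <= u <= T -> E' u <= c * E u)
    by (intros u Hu; eapply Rle_trans; [apply Rle_abs | auto]).
  assert (Hlow : forall u, 0 <= u <= T -> - (c * E u) <= E' u).
  { intros u Hu. enough (- E' u <= c * E u) by lra.
    eapply Rle_trans; [apply Rle_abs | rewrite Rabs_Ropp; auto]. }
  assert (Hexp_mono : exp (c * t) <= exp (c * T)).
  { destruct (Req_dec (c * t) (c * T)) as [e|ne]; [rewrite e; lra |].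
    left. apply exp_increasing. nra. }
  assert (Hinv : exp (- c * t) * exp (c * t) = 1)
    by (rewrite <- exp_plus, <- exp_0; f_equal; ring).
  assert (Hpos := exp_pos (c * t)). assert (Hpos' := exp_pos (- c * t)).
  assert (HE0t := HE0 t). assert (HE00 := HE0 0).
  split.
  - assert (X : E t * exp (- c * t) <= E 0 * exp (- c * 0)).
    { apply (nonpos_derivative_le (fun u => E u * exp (- c * u))
        (fun u => E' u * exp (- c * u) + E u * (exp (- c * u) * - c))); [lra | |].
      - intros u. apply derivable_pt_lim_mult_eq with (lf := E' u) (lg := exp (- c * u) * - c);
          [apply HE | apply derivable_pt_lim_exp_scal | ring].
      - intros u Hu. assert (Hk := Hup u ltac:(lra)). assert (Hp := exp_pos (- c * u)). nra. }
    rewrite Rmult_0_r, exp_0 in X.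
    replace (E t) with (E t * exp (- c * t) * exp (c * t)) by (rewrite Rmult_assoc, Hinv; ring).
    nra.
  - assert (X : - (E t * exp (c * t)) <= - (E 0 * exp (c * 0))).
    { apply (nonpos_derivative_le (fun u => - (E u * exp (c * u)))
        (fun u => - (E' u * exp (c * u) + E u * (exp (c * u) * c)))); [lra | |].
      - intros u. apply derivable_pt_lim_opp with (f := fun u => E u * exp (c * u)).
        apply derivable_pt_lim_mult_eq with (lf := E' u) (lg := exp (c * u) * c);
          [apply HE | apply derivable_pt_lim_exp_scal | ring].
      - intros u Hu. assert (Hk := Hlow u ltac:(lra)). assert (Hp := exp_pos (c * u)). nra. }
    rewrite Rmult_0_r, exp_0 in X. nra.
Qed.

Lemma sqr_dist_deriv_bound u v du dv L : 0 <= L ->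
  Rabs du <= L * (Rabs u + Rabs v) -> Rabs dv <= L * Rabs u ->
  Rabs (2 * u * du + 2 * v * dv) <= 4 * L * (u * u + v * v).
Proof.
  intros HL Hdu Hdv.
  assert (Htri : Rabs (2 * u * du + 2 * v * dv) <= 2 * Rabs u * Rabs du + 2 * Rabs v * Rabs dv).
  { eapply Rle_trans; [apply Rabs_triang |]. rewrite !Rabs_mult, (Rabs_right 2) by lra. lra. }
  assert (Hu : u * u = Rabs u * Rabs u) by (pose proof (Rsqr_abs u) as E; exact E).
  assert (Hv : v * v = Rabs v * Rabs v) by (pose proof (Rsqr_abs v) as E; exact E).
  rewrite Hu, Hv.
  assert (0 <= Rabs u) by apply Rabs_pos. assert (0 <= Rabs v) by apply Rabs_pos.
  assert (Rabs u * Rabs du <= Rabs u * (L * (Rabs u + Rabs v))) by (apply Rmult_le_compat_l; auto).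
  assert (Rabs v * Rabs dv <= Rabs v * (L * Rabs u)) by (apply Rmult_le_compat_l; auto).
  assert (0 <= L * ((Rabs u - Rabs v) * (Rabs u - Rabs v))) 
    by (apply Rmult_le_pos; [auto | apply Rle_0_sqr]).
  nra.
Qed.

Definition sqr_dist (x1 y1 x2 y2 : R) : R := (x1 - x2) * (x1 - x2) + (y1 - y2) * (y1 - y2).

Lemma sqr_dist_nonneg x1 y1 x2 y2 : 0 <= sqr_dist x1 y1 x2 y2.
Proof. unfold sqr_dist. apply Rplus_le_le_0_compat; apply Rle_0_sqr. Qed.

Lemma planar_gronwall (x1 y1 x2 y2 dx1 dy1 dx2 dy2 : R -> R) L T : 0 <= L ->
  (forall t, derivable_pt_lim x1 t (dx1 t)) -> (forall t, derivable_pt_lim y1 t (dy1 t)) ->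
  (forall t, derivable_pt_lim x2 t (dx2 t)) -> (forall t, derivable_pt_lim y2 t (dy2 t)) ->
  (forall t, 0 <= t <= T ->
     Rabs (dx1 t - dx2 t) <= L * (Rabs (x1 t - x2 t) + Rabs (y1 t - y2 t)) /\
     Rabs (dy1 t - dy2 t) <= L * Rabs (x1 t - x2 t)) ->
  forall t, 0 <= t <= T ->
    sqr_dist (x1 t) (y1 t) (x2 t) (y2 t) <= sqr_dist (x1 0) (y1 0) (x2 0) (y2 0) * exp (4 * L * T) /\
    sqr_dist (x1 0) (y1 0) (x2 0) (y2 0) <= sqr_dist (x1 t) (y1 t) (x2 t) (y2 t) * exp (4 * L * T).
Proof.
  intros HL Hx1 Hy1 Hx2 Hy2 Hlip.
  apply (gronwall_two_sided (fun t => sqr_dist (x1 t) (y1 t) (x2 t) (y2 t))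
    (fun t => 2 * (x1 t - x2 t) * (dx1 t - dx2 t) + 2 * (y1 t - y2 t) * (dy1 t - dy2 t)));
    [lra | | intros; apply sqr_dist_nonneg |].
  - intros t. unfold sqr_dist.
    assert (Hx := derivable_pt_lim_minus _ _ t _ _ (Hx1 t) (Hx2 t)).
    assert (Hy := derivable_pt_lim_minus _ _ t _ _ (Hy1 t) (Hy2 t)).
    apply derivable_pt_lim_plus_eq with
      (lf := 2 * (x1 t - x2 t) * (dx1 t - dx2 t)) (lg := 2 * (y1 t - y2 t) * (dy1 t - dy2 t));
      [eapply derivable_pt_lim_mult_eq; [exact Hx | exact Hx | unfold minus_fct; ring]
      |eapply derivable_pt_lim_mult_eq; [exact Hy | exact Hy | unfold minus_fct; ring]
      |ring].
  - intros t Ht. destruct (Hlip t Ht). unfold sqr_dist. apply sqr_dist_deriv_bound; auto.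
Qed.

Lemma frozen_below_invariant f f' p : (forall t, derivable_pt_lim f t (f' t)) ->
  (forall t, f t < p -> f' t = 0) -> p <= f 0 -> forall t, 0 <= t -> p <= f t.
Proof.
  intros Hf Hfrozen H0 t Ht. destruct (Rle_lt_dec p (f t)) as [h|h]; auto.
  assert (Ht' : 0 < t) by (destruct (Req_dec t 0) as [->|]; lra).
  destruct (last_crossing f 0 t p Ht' (derivable_continuous_on f f' 0 t Hf) H0 h)
    as [r [Hr [Hfr Hafter]]].
  destruct (MVT_cor2 f f' r t ltac:(lra) (fun c _ => Hf c)) as [c [Heq Hc]].
  rewrite (Hfrozen c (Hafter c ltac:(lra))) in Heq. lra.
Qed.

Lemma sqr_dist_le0 x1 y1 x2 y2 : sqr_dist x1 y1 x2 y2 <= 0 -> x1 = x2 /\ y1 = y2.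
Proof.
  unfold sqr_dist. intros H.
  assert (0 <= (x1 - x2) * (x1 - x2)) by apply Rle_0_sqr.
  assert (0 <= (y1 - y2) * (y1 - y2)) by apply Rle_0_sqr.
  split; nra.
Qed.

Lemma Rabs_le_of_sqr_le u v K : 0 <= K -> u * u <= K * K * (v * v) -> Rabs u <= K * Rabs v.
Proof.
  intros HK H. pose proof (Rsqr_abs u) as Eu. pose proof (Rsqr_abs v) as Ev.
  unfold Rsqr in Eu, Ev. rewrite Eu, Ev in H.
  assert (0 <= Rabs u) by apply Rabs_pos. assert (0 <= K * Rabs v) by (apply Rmult_le_pos; auto; apply Rabs_pos).
  nra.
Qed.

Lemma Rabs_mult_le x y X Y : Rabs x <= X -> Rabs y <= Y -> Rabs (x * y) <= X * Y.
Proof. intros Hx Hy. rewrite Rabs_mult. apply Rmult_le_compat; auto; apply Rabs_pos. Qed.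

Lemma derivable_pt_lim_pos_right f x l eps : derivable_pt_lim f x l -> 0 < l -> 0 < eps ->
  exists h, 0 < h < eps /\ f x < f (x + h).
Proof.
  intros Hf Hl Heps. destruct (Hf (l / 2) ltac:(lra)) as [del Hdel].
  assert (Hm : 0 < Rmin del eps) by (apply Rmin_pos; [apply cond_pos | auto]).
  assert (Rmin del eps <= del) by apply Rmin_l. assert (Rmin del eps <= eps) by apply Rmin_r.
  set (h := Rmin del eps / 2).
  assert (Hh : 0 < h) by (unfold h; lra).
  assert (X := Hdel h ltac:(lra) ltac:(rewrite Rabs_right; unfold h; lra)).
  apply Rabs_def2 in X.
  assert (Hq : 0 < (f (x + h) - f x) / h) by lra.
  exists h. split; [unfold h; lra |].
  replace (f (x + h) - f x) with ((f (x + h) - f x) / h * h) in Hq |- * by (field; lra).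
  assert (0 < (f (x + h) - f x) / h * h) by (apply Rmult_lt_0_compat; lra).
  replace (f (x + h)) with (f x + (f (x + h) - f x) / h * h) by (field; lra). lra.
Qed.

Lemma close_same_sign u u' : Rabs (u' - u) < Rabs u -> 0 < u' * u.
Proof.
  intros H. apply Rabs_def2 in H. destruct (Rle_lt_dec 0 u) as [h|h].
  - rewrite Rabs_right in H by lra. nra.
  - rewrite Rabs_left in H by lra. nra.
Qed.

Section Flow.

Variables w dw d2w : R -> R.
Hypothesis Hdw : forall x, derivable_pt_lim w x (dw x).
Hypothesis Hd2w : forall x, derivable_pt_lim dw x (d2w x).
Hypothesis Hd2w_cont : forall x, continuity_pt d2w x.

Variables a b : R.
Hypothesis Hab : a < b.

Variables phi dphi P0 P1 P2 : R -> R.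
Hypothesis Hphi_in : forall x, a <= x <= b -> phi x = P0 x.
Hypothesis Hphi_out : forall x, x < a \/ b < x -> phi x = 0.
Hypothesis HP1 : forall x, derivable_pt_lim P0 x (P1 x).
Hypothesis HP2 : forall x, derivable_pt_lim P1 x (P2 x).
Hypothesis HP2_cont : forall x, continuity_pt P2 x.
Hypothesis HP0a : P0 a = 0.
Hypothesis HP1a : P1 a = 0.
Hypothesis HP0b : P0 b = 0.
Hypothesis HP1b : P1 b = 0.
Hypothesis Hdphi : forall x, derivable_pt_lim phi x (dphi x).

Definition xi_rate (p q : R) : R := - dw p * phi p - (q - w p) * dphi p.

Lemma phi_endpoints : phi a = 0 /\ phi b = 0.
Proof. rewrite !Hphi_in by lra. auto. Qed.

Lemma dphi_outside x : x < a \/ b < x -> dphi x = 0.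
Proof.
  intros Hx. assert (Hd : 0 < Rmax (a - x) (x - b)).
  { unfold Rmax. destruct (Rle_dec _ _); lra. }
  apply (derivable_pt_lim_locally_eq phi (fun _ => 0) x (dphi x) 0 (Rmax (a - x) (x - b)));
    auto; [| apply derivable_pt_lim_const].
  intros h Hh. apply Rabs_def2 in Hh. apply Hphi_out.
  unfold Rmax in *. destruct (Rle_dec _ _); lra.
Qed.

Lemma dphi_inside x : a <= x <= b -> dphi x = P1 x.
Proof.
  intros Hx. destruct (Req_dec x a) as [->|Ha]; [| destruct (Req_dec x b) as [->|Hb]].
  - rewrite HP1a. apply (derivable_pt_lim_flat_left phi a (dphi a) 1); auto; [lra |].
    intros h Hh. rewrite Hphi_out, Hphi_in by lra. auto.
  - rewrite HP1b. apply (derivable_pt_lim_flat_right phi b (dphi b) 1); auto; [lra |].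
    intros h Hh. rewrite Hphi_out, Hphi_in by lra. auto.
  - assert (Rmin (x - a) (b - x) <= x - a) by apply Rmin_l.
    assert (Rmin (x - a) (b - x) <= b - x) by apply Rmin_r.
    apply (derivable_pt_lim_locally_eq phi P0 x (dphi x) (P1 x) (Rmin (x - a) (b - x))); auto.
    + apply Rmin_pos; lra.
    + intros h Hh. apply Rabs_def2 in Hh. apply Hphi_in; lra.
Qed.

Lemma coefficients_bounded_lipschitz : exists Mw Lw Mdw Ldw Mp Lp Md Ld,
  bounded_lipschitz_on w a b Mw Lw /\ bounded_lipschitz_on dw a b Mdw Ldw /\
  bounded_lipschitz_on phi a b Mp Lp /\ bounded_lipschitz_on dphi a b Md Ld.
Proof.
  assert (Hab' : a <= b) by lra.
  destruct (C1_bounded_lipschitz_on w dw a b Hab' Hdw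
    (fun x _ => derivable_pt_lim_continuity_pt dw d2w x (Hd2w x))) as [Mw [Lw Hw]].
  destruct (C1_bounded_lipschitz_on dw d2w a b Hab' Hd2w (fun x _ => Hd2w_cont x))
    as [Mdw [Ldw Hdw']].
  destruct (C1_bounded_lipschitz_on P0 P1 a b Hab' HP1
    (fun x _ => derivable_pt_lim_continuity_pt P1 P2 x (HP2 x))) as [Mp [Lp [? [? Hp]]]].
  destruct (C1_bounded_lipschitz_on P1 P2 a b Hab' HP2 (fun x _ => HP2_cont x))
    as [Md [Ld [? [? Hd]]]].
  exists Mw, Lw, Mdw, Ldw, Mp, Lp, Md, Ld. do 2 (split; [assumption |]).
  unfold bounded_lipschitz_on. split; do 2 (split; [assumption |]); intros x y Hx Hy.
  - rewrite !Hphi_in by auto. apply Hp; auto.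
  - rewrite !dphi_inside by auto. apply Hd; auto.
Qed.

Variables xi eta : R -> R -> R.
Hypothesis Hxi : forall x t,
  derivable_pt_lim (fun t => xi t x) t (xi_rate (xi t x) (eta t x)).
Hypothesis Heta : forall x t, derivable_pt_lim (fun t => eta t x) t (phi (xi t x)).
Hypothesis Hxi0 : forall x, xi 0 x = x.
Hypothesis Heta0 : forall x, eta 0 x = w x.

Lemma xi_rate_outside p q : p < a \/ b < p -> xi_rate p q = 0.
Proof. intros Hp. unfold xi_rate. rewrite Hphi_out, dphi_outside by auto. ring. Qed.

Lemma xi_in_interval x t : a <= x <= b -> 0 <= t -> a <= xi t x <= b.
Proof.
  intros Hx Ht. split.
  - apply (frozen_below_invariant (fun t => xi t x) (fun t => xi_rate (xi t x) (eta t x)) a);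
      auto; [intros u Hu; apply xi_rate_outside; auto | rewrite Hxi0; lra].
  - enough (- b <= - xi t x) by lra.
    apply (frozen_below_invariant (fun t => - xi t x)
      (fun t => - xi_rate (xi t x) (eta t x)) (- b)); auto.
    + intros u. apply derivable_pt_lim_opp with (f := fun t => xi t x). auto.
    + intros u Hu. rewrite xi_rate_outside by lra. ring.
    + rewrite Hxi0; lra.
Qed.

Variable t0 : R -> R -> R.
Variable s : R.
Hypothesis Hs : 0 <= s <= 1.
Hypothesis Ht0 : forall x, a <= x <= b ->
  0 <= t0 s x /\
  eta (t0 s x) x = w (xi (t0 s x) x) + s * phi (xi (t0 s x) x) /\
  (forall t, 0 <= t < t0 s x -> eta t x <> w (xi t x) + s * phi (xi t x)).

Definition gap x t : R := eta t x - w (xi t x).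
Definition gap_rate x t : R := phi (xi t x) - dw (xi t x) * xi_rate (xi t x) (eta t x).
Definition phi_xi_rate x t : R := dphi (xi t x) * xi_rate (xi t x) (eta t x).

(* [t0 s x] is the first zero of [level_gap x]. *)
Definition level_gap x t : R := gap x t - s * phi (xi t x).
Definition level_gap_rate x t : R := gap_rate x t - s * phi_xi_rate x t.

Lemma derivable_phi_xi x t : derivable_pt_lim (fun t => phi (xi t x)) t (phi_xi_rate x t).
Proof.
  apply (derivable_pt_lim_comp_eq (fun t => xi t x) phi t (xi_rate (xi t x) (eta t x))
    (dphi (xi t x))); auto.
Qed.

Lemma derivable_gap x t : derivable_pt_lim (gap x) t (gap_rate x t).
Proof.
  apply derivable_pt_lim_minus_eq with (lf := phi (xi t x))
    (lg := dw (xi t x) * xi_rate (xi t x) (eta t x)); auto.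
  apply (derivable_pt_lim_comp_eq (fun t => xi t x) w t (xi_rate (xi t x) (eta t x))
    (dw (xi t x))); auto.
Qed.

Lemma derivable_level_gap x t : derivable_pt_lim (level_gap x) t (level_gap_rate x t).
Proof.
  apply derivable_pt_lim_minus_eq with (lf := gap_rate x t) (lg := s * phi_xi_rate x t);
    [apply derivable_gap | | reflexivity].
  apply (derivable_pt_lim_scal (fun t => phi (xi t x))). apply derivable_phi_xi.
Qed.

Lemma level_gap_t0 x : a <= x <= b -> level_gap x (t0 s x) = 0.
Proof. intros Hx. destruct (Ht0 x Hx) as [_ [Heq _]]. unfold level_gap, gap. lra. Qed.

Lemma level_gap_neq0 x t : a <= x <= b -> 0 <= t < t0 s x -> level_gap x t <> 0.
Proof.
  intros Hx Ht Hz. destruct (Ht0 x Hx) as [_ [_ Hbefore]].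
  apply (Hbefore t Ht). unfold level_gap, gap in Hz. lra.
Qed.

Lemma t0_eq0 x : a <= x <= b -> phi x = 0 \/ s = 0 -> t0 s x = 0.
Proof.
  intros Hx Hz. destruct (Ht0 x Hx) as [Hge _].
  destruct (Req_dec (t0 s x) 0) as [h|h]; auto. exfalso.
  apply (level_gap_neq0 x 0 Hx); [lra |].
  unfold level_gap, gap. rewrite Hxi0, Heta0. destruct Hz as [Hz|Hz]; rewrite Hz; ring.
Qed.

Lemma level_gap_sign x : a <= x <= b -> 0 < s -> phi x <> 0 ->
  forall t, 0 <= t < t0 s x -> level_gap x t * phi x < 0.
Proof.
  intros Hx Hs0 Hp t Ht. destruct (Rlt_le_dec (level_gap x t * phi x) 0) as [h|h]; auto.
  exfalso.
  destruct (IVT_continuous_on (fun u => level_gap x u * phi x) 0 t) as [r [Hr Hfr]];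
    [lra | | | exact h |].
  - apply (derivable_continuous_on _ (fun u => level_gap_rate x u * phi x)).
    intros u. apply derivable_pt_lim_mult_const, derivable_level_gap.
  - unfold level_gap, gap. rewrite Hxi0, Heta0.
    assert (0 < phi x * phi x) by (apply Rsqr_pos_lt; auto). nra.
  - apply Rmult_integral in Hfr. destruct Hfr as [Hfr|Hfr]; [| contradiction].
    apply (level_gap_neq0 x r Hx); [lra | exact Hfr].
Qed.

Lemma derivable_gap_ratio x t : phi (xi t x) <> 0 ->
  derivable_pt_lim (fun t => gap x t / phi (xi t x)) t
    (1 + (xi_rate (xi t x) (eta t x) / phi (xi t x)) ^ 2).
Proof.
  intros Hp. apply derivable_pt_lim_div_eq with (lf := gap_rate x t) (lg := phi_xi_rate x t);
    [apply derivable_gap | apply derivable_phi_xi | exact Hp |].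
  unfold gap_rate, phi_xi_rate, Rsqr.
  replace (xi_rate (xi t x) (eta t x)) with
    (- dw (xi t x) * phi (xi t x) - gap x t * dphi (xi t x)) by (unfold xi_rate, gap; ring).
  field. exact Hp.
Qed.

Lemma gap_ratio_bounds x r : a <= x <= b -> 0 < s -> phi x <> 0 -> r <= t0 s x ->
  (forall u, 0 <= u < r -> 0 < phi (xi u x) * phi x) ->
  forall u, 0 <= u < r -> u <= gap x u / phi (xi u x) < s.
Proof.
  intros Hx Hs0 Hp Hrt0 Hsign u Hu.
  assert (Hnz : forall c, 0 <= c < r -> phi (xi c x) <> 0).
  { intros c Hc Hz. assert (Z := Hsign c Hc). rewrite Hz in Z. lra. }
  split.
  - destruct (Req_dec u 0) as [->|hu].
    + unfold gap. rewrite Hxi0, Heta0, Rminus_diag. unfold Rdiv. rewrite Rmult_0_l. lra.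
    + destruct (MVT_cor2 (fun t => gap x t / phi (xi t x))
        (fun t => 1 + (xi_rate (xi t x) (eta t x) / phi (xi t x)) ^ 2) 0 u ltac:(lra)
        (fun c Hc => derivable_gap_ratio x c (Hnz c ltac:(lra)))) as [c [Heq Hc]].
      unfold gap at 2 in Heq. rewrite Hxi0, Heta0, Rminus_diag in Heq.
      unfold Rdiv at 2 in Heq. rewrite Rmult_0_l in Heq.
      assert (0 <= (xi_rate (xi c x) (eta c x) / phi (xi c x)) ^ 2) by apply pow2_ge_0.
      nra.
  - assert (Hneg := level_gap_sign x Hx Hs0 Hp u ltac:(lra)). unfold level_gap in Hneg.
    assert (Hpos := Hsign u Hu). assert (Hn := Hnz u Hu).
    assert (E : (gap x u / phi (xi u x) - s) * (phi (xi u x) * phi x) =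
                (gap x u - s * phi (xi u x)) * phi x) by (field; auto).
    destruct (Rlt_le_dec (gap x u / phi (xi u x) - s) 0) as [h|h]; [lra |].
    assert (0 <= (gap x u / phi (xi u x) - s) * (phi (xi u x) * phi x))
      by (apply Rmult_le_pos; lra).
    lra.
Qed.

Section Estimates.

Variables Mw Lw Mdw Ldw Mp Lp Md Ld : R.
Hypothesis Hw_bl : bounded_lipschitz_on w a b Mw Lw.
Hypothesis Hdw_bl : bounded_lipschitz_on dw a b Mdw Ldw.
Hypothesis Hphi_bl : bounded_lipschitz_on phi a b Mp Lp.
Hypothesis Hdphi_bl : bounded_lipschitz_on dphi a b Md Ld.

(* [eta] moves at speed at most [Mp], so this bounds it up to time 2, the horizon of all
   estimates below (enough, since [t0 <= 1]). *)
Definition eta_bound : R := Mw + 2 * Mp.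

Definition field_lip : R :=
  Ldw * Mp + Mdw * Lp + (eta_bound + Mw) * Ld + Lw * Md + Md + Lp.

Lemma field_lip_ge : Md + Lp <= field_lip.
Proof.
  destruct Hw_bl as [? [? _]], Hdw_bl as [? [? _]], Hphi_bl as [? [? _]],
    Hdphi_bl as [? [? _]].
  unfold field_lip, eta_bound.
  assert (0 <= Ldw * Mp) by (apply Rmult_le_pos; auto).
  assert (0 <= Mdw * Lp) by (apply Rmult_le_pos; auto).
  assert (0 <= (Mw + 2 * Mp + Mw) * Ld) by (apply Rmult_le_pos; lra).
  assert (0 <= Lw * Md) by (apply Rmult_le_pos; auto). lra.
Qed.

Lemma field_lip_nonneg : 0 <= field_lip.
Proof.
  destruct Hphi_bl as [_ [? _]], Hdphi_bl as [? _]. pose proof field_lip_ge. lra.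
Qed.

Lemma phi_bounded x : Rabs (phi x) <= Mp.
Proof.
  destruct Hphi_bl as [HM [_ Hphi]].
  destruct (Rlt_dec x a) as [h|h]; [rewrite Hphi_out, Rabs_R0 by auto; lra |].
  destruct (Rlt_dec b x) as [h'|h']; [rewrite Hphi_out, Rabs_R0 by auto; lra |].
  apply (Hphi x x); lra.
Qed.

Lemma phi_lipschitz p1 p2 : a <= p1 <= b -> a <= p2 <= b ->
  Rabs (phi p1 - phi p2) <= field_lip * Rabs (p1 - p2).
Proof.
  intros H1 H2. destruct Hphi_bl as [_ [_ Hphi]], Hdphi_bl as [? _].
  eapply Rle_trans; [apply (Hphi p1 p2 H1 H2) |].
  apply Rmult_le_compat_r; [apply Rabs_pos |]. pose proof field_lip_ge. lra.
Qed.

Lemma xi_rate_lipschitz p1 q1 p2 q2 : a <= p1 <= b -> a <= p2 <= b ->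
  Rabs q1 <= eta_bound -> Rabs q2 <= eta_bound ->
  Rabs (xi_rate p1 q1 - xi_rate p2 q2) <= field_lip * (Rabs (p1 - p2) + Rabs (q1 - q2)).
Proof.
  intros H1 H2 Hq1 Hq2.
  destruct Hw_bl as [HMw [HLw Hw]], Hdw_bl as [HMdw [HLdw Hdw']],
    Hphi_bl as [HMp [HLp Hphi]], Hdphi_bl as [HMd [HLd Hdphi']].
  destruct (Hw p1 p2 H1 H2) as [Hw1 Hw12], (Hdw' p1 p2 H1 H2) as [_ Hdw12],
    (Hphi p1 p2 H1 H2) as [Hp1 Hp12], (Hdphi' p1 p2 H1 H2) as [_ Hd12].
  destruct (Hdw' p2 p1 H2 H1) as [Hdw2 _], (Hdphi' p2 p1 H2 H1) as [Hd2 _].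
  set (D := Rabs (p1 - p2)) in *. set (Q := Rabs (q1 - q2)).
  assert (0 <= D) by apply Rabs_pos. assert (0 <= Q) by apply Rabs_pos.
  replace (xi_rate p1 q1 - xi_rate p2 q2) with
    (- ((dw p1 - dw p2) * phi p1 + dw p2 * (phi p1 - phi p2))
     - ((q1 - w p1) * (dphi p1 - dphi p2) + ((q1 - q2) - (w p1 - w p2)) * dphi p2))
    by (unfold xi_rate; ring).
  assert (A1 := Rabs_mult_le _ _ _ _ Hdw12 Hp1).
  assert (A2 := Rabs_mult_le _ _ _ _ Hdw2 Hp12).
  assert (Hqw : Rabs (q1 - w p1) <= eta_bound + Mw).
  { unfold Rminus. eapply Rle_trans; [apply Rabs_triang | rewrite Rabs_Ropp; lra]. }
  assert (A3 := Rabs_mult_le _ _ _ _ Hqw Hd12).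
  assert (Hqq : Rabs ((q1 - q2) - (w p1 - w p2)) <= Q + Lw * D).
  { replace ((q1 - q2) - (w p1 - w p2)) with ((q1 - q2) + - (w p1 - w p2)) by ring.
    eapply Rle_trans; [apply Rabs_triang | rewrite Rabs_Ropp; fold Q; lra]. }
  assert (A4 := Rabs_mult_le _ _ _ _ Hqq Hd2).
  eapply Rle_trans; [apply Rabs_triang |]. rewrite !Rabs_Ropp.
  eapply Rle_trans; [apply Rplus_le_compat; apply Rabs_triang |].
  assert (0 <= Ldw * Mp) by (apply Rmult_le_pos; auto).
  assert (0 <= Mdw * Lp) by (apply Rmult_le_pos; auto).
  assert (0 <= (eta_bound + Mw) * Ld) by (apply Rmult_le_pos; unfold eta_bound; lra).
  assert (0 <= Lw * Md) by (apply Rmult_le_pos; auto).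
  unfold field_lip. nra.
Qed.

Definition solution (X Y : R -> R) : Prop :=
  (forall t, derivable_pt_lim X t (xi_rate (X t) (Y t))) /\
  (forall t, derivable_pt_lim Y t (phi (X t))) /\
  (forall t, 0 <= t <= 2 -> a <= X t <= b /\ Rabs (Y t) <= eta_bound).

Definition gronwall_factor : R := exp (4 * field_lip * 2).

Lemma gronwall_factor_ge1 : 1 <= gronwall_factor.
Proof.
  unfold gronwall_factor. rewrite <- exp_0. pose proof field_lip_nonneg.
  destruct (Req_dec field_lip 0) as [->|h].
  - right. f_equal. ring.
  - left. apply exp_increasing. lra.
Qed.

Lemma solution_gronwall X1 Y1 X2 Y2 : solution X1 Y1 -> solution X2 Y2 ->
  forall t, 0 <= t <= 2 ->
    sqr_dist (X1 t) (Y1 t) (X2 t) (Y2 t) <= sqr_dist (X1 0) (Y1 0) (X2 0) (Y2 0) * gronwall_factor /\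
    sqr_dist (X1 0) (Y1 0) (X2 0) (Y2 0) <= sqr_dist (X1 t) (Y1 t) (X2 t) (Y2 t) * gronwall_factor.
Proof.
  intros [HX1 [HY1 Hin1]] [HX2 [HY2 Hin2]].
  apply (planar_gronwall X1 Y1 X2 Y2 (fun t => xi_rate (X1 t) (Y1 t)) (fun t => phi (X1 t))
    (fun t => xi_rate (X2 t) (Y2 t)) (fun t => phi (X2 t)) field_lip 2 field_lip_nonneg); auto.
  intros u Hu. destruct (Hin1 u Hu), (Hin2 u Hu).
  split; [apply xi_rate_lipschitz | apply phi_lipschitz]; auto.
Qed.

Lemma eta_bounded x t : a <= x <= b -> 0 <= t <= 2 -> Rabs (eta t x) <= eta_bound.
Proof.
  intros Hx Ht. destruct Hw_bl as [_ [_ Hw]], Hphi_bl as [HMp _].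
  assert (Hwx := proj1 (Hw x x Hx Hx)). unfold eta_bound.
  destruct (Req_dec t 0) as [->|h]; [rewrite Heta0; lra |].
  destruct (MVT_cor2 (fun t => eta t x) (fun t => phi (xi t x)) 0 t ltac:(lra)
    (fun c _ => Heta x c)) as [c [Heq Hc]].
  rewrite Heta0 in Heq. replace (eta t x) with (w x + phi (xi c x) * t) by lra.
  eapply Rle_trans; [apply Rabs_triang |]. rewrite Rabs_mult, (Rabs_right t) by lra.
  assert (Rabs (phi (xi c x)) * t <= Mp * 2)
    by (apply Rmult_le_compat; [apply Rabs_pos | lra | apply phi_bounded | lra]).
  lra.
Qed.

Lemma trajectory_solution x : a <= x <= b -> solution (fun t => xi t x) (fun t => eta t x).
Proof.
  intros Hx. split; [| split]; auto.
  intros t Ht. split; [apply xi_in_interval; lra | apply eta_bounded; auto].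
Qed.

Lemma equilibrium_solution z : a <= z <= b -> phi z = 0 -> solution (fun _ => z) (fun _ => w z).
Proof.
  intros Hz Hp. destruct Hw_bl as [_ [_ Hw]], Hphi_bl as [HMp _].
  split; [| split].
  - intros t. apply derivable_pt_lim_const_eq. unfold xi_rate. rewrite Hp. ring.
  - intros t. apply derivable_pt_lim_const_eq. auto.
  - intros t Ht. split; auto. assert (Hwz := proj1 (Hw z z Hz Hz)). unfold eta_bound. lra.
Qed.

Lemma trajectory_reaches_equilibrium x z t : a <= x <= b -> a <= z <= b -> phi z = 0 ->
  0 <= t <= 2 -> xi t x = z -> eta t x = w z -> x = z.
Proof.
  intros Hx Hz Hp Ht Hxi_t Heta_t.
  destruct (solution_gronwall _ _ _ _ (trajectory_solution x Hx) (equilibrium_solution z Hz Hp)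
    t Ht) as [_ H].
  simpl in H. rewrite Hxi_t, Heta_t, Hxi0, Heta0 in H.
  unfold sqr_dist at 2 in H. rewrite !Rminus_diag, Rmult_0_l, Rplus_0_l, Rmult_0_l in H.
  apply sqr_dist_le0 in H. tauto.
Qed.

Lemma equilibrium_stationary x t : a <= x <= b -> phi x = 0 -> 0 <= t <= 2 ->
  xi t x = x /\ eta t x = w x.
Proof.
  intros Hx Hp Ht.
  destruct (solution_gronwall _ _ _ _ (trajectory_solution x Hx) (equilibrium_solution x Hx Hp)
    t Ht) as [H _].
  simpl in H. rewrite Hxi0, Heta0 in H.
  unfold sqr_dist at 2 in H. rewrite !Rminus_diag, Rmult_0_l, Rplus_0_l, Rmult_0_l in H.
  exact (sqr_dist_le0 _ _ _ _ H).
Qed.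

Definition flow_lip : R := gronwall_factor * (1 + Lw * Lw) + 1.

Lemma flow_lip_ge1 : 1 <= flow_lip.
Proof.
  unfold flow_lip. pose proof gronwall_factor_ge1.
  assert (0 <= Lw * Lw) by apply Rle_0_sqr. nra.
Qed.

Lemma flow_lipschitz x x' t : a <= x <= b -> a <= x' <= b -> 0 <= t <= 2 ->
  Rabs (xi t x - xi t x') <= flow_lip * Rabs (x - x') /\
  Rabs (eta t x - eta t x') <= flow_lip * Rabs (x - x').
Proof.
  intros Hx Hx' Ht.
  destruct (solution_gronwall _ _ _ _ (trajectory_solution x Hx) (trajectory_solution x' Hx')
    t Ht) as [H _].
  simpl in H. rewrite !Hxi0, !Heta0 in H. unfold sqr_dist in H.
  destruct Hw_bl as [_ [HLw Hw]]. assert (Hwl := proj2 (Hw x x' Hx Hx')).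
  assert (Hv : (w x - w x') * (w x - w x') <= Lw * Lw * ((x - x') * (x - x'))).
  { pose proof (Rsqr_abs (w x - w x')) as E1. pose proof (Rsqr_abs (x - x')) as E2.
    unfold Rsqr in E1, E2. rewrite E1, E2.
    assert (0 <= Rabs (w x - w x')) by apply Rabs_pos. nra. }
  pose proof gronwall_factor_ge1. pose proof flow_lip_ge1.
  assert (Hu : 0 <= (x - x') * (x - x')) by apply Rle_0_sqr.
  assert (Hbig : ((x - x') * (x - x') + (w x - w x') * (w x - w x')) * gronwall_factor <=
                 flow_lip * flow_lip * ((x - x') * (x - x'))).
  { assert (gronwall_factor * (1 + Lw * Lw) <= flow_lip * flow_lip) by (unfold flow_lip in *; nra).
    nra. }
  assert (0 <= (xi t x - xi t x') * (xi t x - xi t x')) by apply Rle_0_sqr.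
  assert (0 <= (eta t x - eta t x') * (eta t x - eta t x')) by apply Rle_0_sqr.
  split; apply Rabs_le_of_sqr_le; lra.
Qed.

Lemma gap_sqr_le_at_first_zero x r : a <= x <= b -> 0 < s -> phi x <> 0 -> 0 < r ->
  r <= t0 s x -> (forall u, 0 <= u < r -> 0 < phi (xi u x) * phi x) ->
  gap x r * gap x r <= phi (xi r x) * phi (xi r x).
Proof.
  intros Hx Hs0 Hp Hr Hrt0 Hsign.
  enough (0 <= phi (xi r x) * phi (xi r x) - gap x r * gap x r) by lra.
  apply (continuous_on_nonneg_right_end
    (fun u => phi (xi u x) * phi (xi u x) - gap x u * gap x u) 0 r Hr).
  - apply (derivable_continuous_on _ (fun u =>
      phi_xi_rate x u * phi (xi u x) + phi (xi u x) * phi_xi_rate x u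
      - (gap_rate x u * gap x u + gap x u * gap_rate x u))).
    intros u. apply derivable_pt_lim_minus_eq with
      (lf := phi_xi_rate x u * phi (xi u x) + phi (xi u x) * phi_xi_rate x u)
      (lg := gap_rate x u * gap x u + gap x u * gap_rate x u); [| | reflexivity].
    + apply derivable_pt_lim_mult_eq with (lf := phi_xi_rate x u) (lg := phi_xi_rate x u);
        [apply derivable_phi_xi | apply derivable_phi_xi | reflexivity].
    + apply derivable_pt_lim_mult_eq with (lf := gap_rate x u) (lg := gap_rate x u);
        [apply derivable_gap | apply derivable_gap | reflexivity].
  - intros u Hu.
    destruct (gap_ratio_bounds x r Hx Hs0 Hp Hrt0 Hsign u Hu) as [Hlo Hhi].
    assert (Hn : phi (xi u x) <> 0).
    { intros Hz. assert (Z := Hsign u Hu). rewrite Hz in Z. lra. }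
    replace (gap x u) with (gap x u / phi (xi u x) * phi (xi u x)) by (field; auto).
    assert (0 <= phi (xi u x) * phi (xi u x)) by apply Rle_0_sqr.
    assert ((gap x u / phi (xi u x)) * (gap x u / phi (xi u x)) <= 1) by nra.
    nra.
Qed.

Lemma phi_sign_kept_upto x : a <= x <= b -> 0 < s -> phi x <> 0 ->
  forall t, 0 <= t <= Rmin (t0 s x) 2 -> 0 < phi (xi t x) * phi x.
Proof.
  intros Hx Hs0 Hp t Ht.
  destruct (Rlt_le_dec 0 (phi (xi t x) * phi x)) as [h|h]; auto. exfalso.
  assert (Hf0 : 0 < phi (xi 0 x) * phi x) by (rewrite Hxi0; apply Rsqr_pos_lt; auto).
  assert (Ht' : 0 < t) by (destruct (Req_dec t 0) as [->|]; lra).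
  destruct (first_crossing (fun t => phi (xi t x) * phi x) 0 t 0 Ht') as [r [Hr [Hfr Hbefore]]];
    auto.
  { apply (derivable_continuous_on _ (fun t => phi_xi_rate x t * phi x)). intros u.
    apply derivable_pt_lim_mult_const, derivable_phi_xi. }
  assert (Rmin (t0 s x) 2 <= t0 s x) by apply Rmin_l.
  assert (Rmin (t0 s x) 2 <= 2) by apply Rmin_r.
  assert (Hpr : phi (xi r x) = 0).
  { apply Rmult_integral in Hfr. destruct Hfr; auto. contradiction. }
  assert (Hgap := gap_sqr_le_at_first_zero x r Hx Hs0 Hp ltac:(lra) ltac:(lra) Hbefore).
  rewrite Hpr, Rmult_0_l in Hgap.
  assert (Hgap0 : gap x r = 0) by (pose proof (Rle_0_sqr (gap x r)); unfold Rsqr in *; nra).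
  unfold gap in Hgap0.
  apply Hp. rewrite (trajectory_reaches_equilibrium x (xi r x) r Hx
    (xi_in_interval x r Hx ltac:(lra)) Hpr ltac:(lra) eq_refl ltac:(lra)).
  exact Hpr.
Qed.

Lemma t0_le1 x : a <= x <= b -> t0 s x <= 1.
Proof.
  intros Hx.
  destruct (Req_dec s 0) as [hs|hs]; [rewrite t0_eq0; auto; lra |].
  destruct (Req_dec (phi x) 0) as [hp|hp]; [rewrite t0_eq0; auto; lra |].
  destruct (Rle_lt_dec (t0 s x) 1) as [h|h]; auto. exfalso.
  assert (Hs0 : 0 < s) by lra.
  set (r := Rmin (t0 s x) 2).
  assert (Hr : 1 < r) by (unfold r, Rmin; destruct (Rle_dec _ _); lra).
  assert (r <= t0 s x) by apply Rmin_l.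
  destruct (gap_ratio_bounds x r Hx Hs0 hp ltac:(lra)
    (fun u Hu => phi_sign_kept_upto x Hx Hs0 hp u ltac:(unfold r in *; lra)) 1 ltac:(lra)).
  lra.
Qed.

Lemma phi_sign_kept x : a <= x <= b -> 0 < s -> phi x <> 0 ->
  forall t, 0 <= t <= t0 s x -> 0 < phi (xi t x) * phi x.
Proof.
  intros Hx Hs0 Hp t Ht. apply phi_sign_kept_upto; auto.
  assert (H := t0_le1 x Hx). unfold Rmin. destruct (Rle_dec _ _); lra.
Qed.

Lemma t0_range x : a <= x <= b -> 0 <= t0 s x <= 1.
Proof. intros Hx. split; [apply (Ht0 x Hx) | apply t0_le1; auto]. Qed.

Definition level_lip : R := flow_lip + Lw * flow_lip + s * Lp * flow_lip.

Lemma level_lip_nonneg : 0 <= level_lip.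
Proof.
  unfold level_lip. destruct Hw_bl as [_ [HLw _]], Hphi_bl as [_ [HLp _]].
  pose proof flow_lip_ge1.
  assert (0 <= Lw * flow_lip) by (apply Rmult_le_pos; lra).
  assert (0 <= s * Lp * flow_lip) by (apply Rmult_le_pos; [apply Rmult_le_pos |]; lra). lra.
Qed.

Lemma level_gap_lipschitz x x' t : a <= x <= b -> a <= x' <= b -> 0 <= t <= 2 ->
  Rabs (level_gap x' t - level_gap x t) <= level_lip * Rabs (x' - x).
Proof.
  intros Hx Hx' Ht. destruct (flow_lipschitz x' x t Hx' Hx Ht) as [Hxi' Heta'].
  assert (S1 := xi_in_interval x t Hx ltac:(lra)).
  assert (S2 := xi_in_interval x' t Hx' ltac:(lra)).
  destruct Hw_bl as [_ [HLw Hw]], Hphi_bl as [_ [HLp Hphi]].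
  assert (Hwd := proj2 (Hw _ _ S2 S1)). assert (Hpd := proj2 (Hphi _ _ S2 S1)).
  unfold level_gap, gap.
  replace (eta t x' - w (xi t x') - s * phi (xi t x') - (eta t x - w (xi t x) - s * phi (xi t x)))
    with ((eta t x' - eta t x) + - (w (xi t x') - w (xi t x))
          + - (s * (phi (xi t x') - phi (xi t x)))) by ring.
  eapply Rle_trans; [apply Rabs_triang |].
  eapply Rle_trans; [apply Rplus_le_compat_r, Rabs_triang |].
  rewrite !Rabs_Ropp, Rabs_mult, (Rabs_right s) by lra.
  set (D := Rabs (x' - x)) in *.
  assert (Rabs (w (xi t x') - w (xi t x)) <= Lw * (flow_lip * D))
    by (eapply Rle_trans; [exact Hwd | apply Rmult_le_compat_l; auto]).
  assert (s * Rabs (phi (xi t x') - phi (xi t x)) <= s * (Lp * (flow_lip * D))).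
  { apply Rmult_le_compat_l; [lra |].
    eapply Rle_trans; [exact Hpd | apply Rmult_le_compat_l; auto]. }
  unfold level_lip. lra.
Qed.

Lemma level_gap_uniformly_close x eps : a <= x <= b -> 0 < eps ->
  exists d, 0 < d /\ forall x' t, a <= x' <= b -> Rabs (x' - x) < d -> 0 <= t <= 2 ->
    Rabs (level_gap x' t - level_gap x t) < eps.
Proof.
  intros Hx Heps. pose proof level_lip_nonneg.
  exists (eps / (level_lip + 1)). split; [apply Rdiv_lt_0_compat; lra |].
  intros x' t Hx' Hd Ht.
  eapply Rle_lt_trans; [apply level_gap_lipschitz; auto |].
  apply Rle_lt_trans with ((level_lip + 1) * Rabs (x' - x)).
  - assert (0 <= Rabs (x' - x)) by apply Rabs_pos. nra.
  - apply (Rmult_lt_compat_l (level_lip + 1)) in Hd; [| lra].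
    replace ((level_lip + 1) * (eps / (level_lip + 1))) with eps in Hd by (field; lra). exact Hd.
Qed.

Lemma t0_lower_semicontinuous x eps : a <= x <= b -> 0 < eps ->
  exists d, 0 < d /\ forall x', a <= x' <= b -> Rabs (x' - x) < d -> t0 s x - eps < t0 s x'.
Proof.
  intros Hx Heps. assert (Hr := t0_range x Hx).
  destruct (Rlt_le_dec (t0 s x - eps) 0) as [hq|hq].
  { exists 1. split; [lra |]. intros x' Hx' _. destruct (Ht0 x' Hx') as [Hge _]. lra. }
  destruct (continuity_ab_min (fun t => Rabs (level_gap x t)) 0 (t0 s x - eps) hq)
    as [tm [Hmin Htm]].
  { intros c _. apply (continuity_pt_comp (level_gap x) Rabs); [| apply Rcontinuity_abs].
    exact (derivable_pt_lim_continuity_pt _ (level_gap_rate x) c (derivable_level_gap x c)). }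
  assert (Hm : 0 < Rabs (level_gap x tm)) by (apply Rabs_pos_lt, level_gap_neq0; auto; lra).
  destruct (level_gap_uniformly_close x _ Hx Hm) as [d [Hd Hclose]].
  exists d. split; auto. intros x' Hx' Hdx.
  destruct (Rlt_le_dec (t0 s x - eps) (t0 s x')) as [h|h]; auto. exfalso.
  assert (Ht' := t0_range x' Hx').
  assert (X := Hclose x' (t0 s x') Hx' Hdx ltac:(lra)).
  rewrite level_gap_t0, Rminus_0_l, Rabs_Ropp in X by auto.
  assert (Y := Hmin (t0 s x') ltac:(lra)). lra.
Qed.

Lemma phi_sign_near x : phi x <> 0 ->
  exists d, 0 < d /\ forall x', Rabs (x' - x) < d -> 0 < phi x' * phi x.
Proof.
  intros Hp.
  destruct (derivable_pt_lim_continuity_pt phi dphi x (Hdphi x) (Rabs (phi x)) (Rabs_pos_lt _ Hp))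
    as [d [Hd Hclose]].
  exists d. split; auto. intros x' Hx'.
  destruct (Req_dec x' x) as [->|hne]; [apply Rsqr_pos_lt; auto |].
  apply close_same_sign, (Hclose x' (conj (conj I (not_eq_sym hne)) Hx')).
Qed.

Lemma level_gap_rate_t0_sign x : a <= x <= b -> 0 < s -> phi x <> 0 ->
  0 < level_gap_rate x (t0 s x) * phi x.
Proof.
  intros Hx Hs0 Hp. destruct (Ht0 x Hx) as [Hge [Heq _]].
  assert (Hsign := phi_sign_kept x Hx Hs0 Hp (t0 s x) ltac:(lra)).
  set (tau := t0 s x) in *.
  set (k := dw (xi tau x) + s * dphi (xi tau x)).
  replace (level_gap_rate x tau) with (phi (xi tau x) * (1 + k * k))
    by (unfold level_gap_rate, gap_rate, phi_xi_rate, xi_rate, k; rewrite Heq; ring).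
  assert (0 <= k * k) by apply Rle_0_sqr.
  replace (phi (xi tau x) * (1 + k * k) * phi x) with ((phi (xi tau x) * phi x) * (1 + k * k))
    by ring.
  apply Rmult_lt_0_compat; lra.
Qed.

Lemma t0_upper_semicontinuous x eps : a <= x <= b -> 0 < s -> phi x <> 0 -> 0 < eps ->
  exists d, 0 < d /\ forall x', a <= x' <= b -> Rabs (x' - x) < d -> t0 s x' < t0 s x + eps.
Proof.
  intros Hx Hs0 Hp Heps. assert (Hr := t0_range x Hx).
  set (tau := t0 s x) in *.
  destruct (derivable_pt_lim_pos_right (fun t => level_gap x t * phi x) tau _ (Rmin eps 1)
    (derivable_pt_lim_mult_const _ _ tau _ (derivable_level_gap x tau))
    (level_gap_rate_t0_sign x Hx Hs0 Hp) ltac:(apply Rmin_pos; lra)) as [h [Hh Hafter]].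
  assert (Rmin eps 1 <= eps) by apply Rmin_l. assert (Rmin eps 1 <= 1) by apply Rmin_r.
  unfold tau in Hafter. rewrite level_gap_t0, Rmult_0_l in Hafter by auto. fold tau in Hafter.
  assert (Hnz : 0 < Rabs (level_gap x (tau + h))).
  { apply Rabs_pos_lt. intros Hz. rewrite Hz in Hafter. lra. }
  destruct (level_gap_uniformly_close x _ Hx Hnz) as [d2 [Hd2 Hclose]].
  destruct (phi_sign_near x Hp) as [d1 [Hd1 Hnear]].
  exists (Rmin d1 d2). split; [apply Rmin_pos; auto |]. intros x' Hx' Hdx.
  assert (Rmin d1 d2 <= d1) by apply Rmin_l. assert (Rmin d1 d2 <= d2) by apply Rmin_r.
  assert (Hend : 0 < level_gap x' (tau + h) * phi x).
  { assert (Y := close_same_sign _ _ (Hclose x' (tau + h) Hx' ltac:(lra) ltac:(lra))).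
    assert (0 < level_gap x' (tau + h) * level_gap x (tau + h) * (level_gap x (tau + h) * phi x))
      by (apply Rmult_lt_0_compat; auto).
    assert (0 < level_gap x (tau + h) * level_gap x (tau + h))
      by (apply Rsqr_pos_lt; intros Hz; rewrite Hz in Hafter; lra).
    nra. }
  assert (Hstart : level_gap x' 0 * phi x <= 0).
  { unfold level_gap, gap. rewrite Hxi0, Heta0. assert (Z := Hnear x' ltac:(lra)). nra. }
  destruct (IVT_continuous_on (fun t => level_gap x' t * phi x) 0 (tau + h)) as [r [Hr0 Hr1]];
    [lra | | exact Hstart | lra |].
  { apply (derivable_continuous_on _ (fun t => level_gap_rate x' t * phi x)). intros c.
    apply derivable_pt_lim_mult_const, derivable_level_gap. }
  destruct (Rle_lt_dec (t0 s x') r) as [hh|hh]; [lra | exfalso].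
  apply Rmult_integral in Hr1. destruct Hr1 as [Hr1|Hr1]; [| contradiction].
  exact (level_gap_neq0 x' r Hx' ltac:(lra) Hr1).
Qed.

Lemma t0_continuous x eps : a <= x <= b -> 0 < s -> phi x <> 0 -> 0 < eps ->
  exists d, 0 < d /\ forall x', a <= x' <= b -> Rabs (x' - x) < d -> Rabs (t0 s x' - t0 s x) < eps.
Proof.
  intros Hx Hs0 Hp Heps.
  destruct (t0_lower_semicontinuous x eps Hx Heps) as [d1 [Hd1 Hlo]].
  destruct (t0_upper_semicontinuous x eps Hx Hs0 Hp Heps) as [d2 [Hd2 Hup]].
  exists (Rmin d1 d2). split; [apply Rmin_pos; auto |]. intros x' Hx' Hdx.
  assert (Rmin d1 d2 <= d1) by apply Rmin_l. assert (Rmin d1 d2 <= d2) by apply Rmin_r.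
  assert (Hl := Hlo x' Hx' ltac:(lra)). assert (Hu := Hup x' Hx' ltac:(lra)).
  apply Rabs_def1; lra.
Qed.

Lemma xi_t0_continuous : 0 < s -> continuous_on (fun x => xi (t0 s x) x) a b.
Proof.
  intros Hs0 x Hx eps Heps. pose proof flow_lip_ge1.
  destruct (Req_dec (phi x) 0) as [hp|hp].
  - exists (eps / flow_lip). split; [apply Rdiv_lt_0_compat; lra |].
    intros x' Hx' Hd. rewrite (t0_eq0 x Hx (or_introl hp)), Hxi0.
    assert (Hr := t0_range x' Hx').
    destruct (equilibrium_stationary x (t0 s x') Hx hp ltac:(lra)) as [Hst _].
    replace (xi (t0 s x') x' - x) with (xi (t0 s x') x' - xi (t0 s x') x) by (rewrite Hst; ring).
    eapply Rle_lt_trans; [apply (flow_lipschitz x' x); auto; lra |].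
    apply (Rmult_lt_compat_l flow_lip) in Hd; [| lra].
    replace (flow_lip * (eps / flow_lip)) with eps in Hd by (field; lra). exact Hd.
  - assert (Hr := t0_range x Hx).
    destruct (derivable_continuous_on (fun t => xi t x) (fun t => xi_rate (xi t x) (eta t x))
      0 2 (Hxi x) (t0 s x) ltac:(lra) (eps / 2) ltac:(lra)) as [dt [Hdt Hxi_close]].
    destruct (t0_continuous x dt Hx Hs0 hp Hdt) as [d0 [Hd0 Ht0_close]].
    exists (Rmin d0 (eps / (2 * flow_lip))). split.
    { apply Rmin_pos; auto. apply Rdiv_lt_0_compat; lra. }
    intros x' Hx' Hd.
    assert (Rmin d0 (eps / (2 * flow_lip)) <= d0) by apply Rmin_l.
    assert (Rmin d0 (eps / (2 * flow_lip)) <= eps / (2 * flow_lip)) by apply Rmin_r.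
    assert (Hr' := t0_range x' Hx').
    replace (xi (t0 s x') x' - xi (t0 s x) x) with
      ((xi (t0 s x') x' - xi (t0 s x') x) + (xi (t0 s x') x - xi (t0 s x) x)) by ring.
    eapply Rle_lt_trans; [apply Rabs_triang |].
    assert (A1 := proj1 (flow_lipschitz x' x (t0 s x') Hx' Hx ltac:(lra))).
    assert (A2 := Hxi_close (t0 s x') ltac:(lra) (Ht0_close x' Hx' ltac:(lra))).
    assert (W : flow_lip * Rabs (x' - x) < flow_lip * (eps / (2 * flow_lip)))
      by (apply Rmult_lt_compat_l; lra).
    replace (flow_lip * (eps / (2 * flow_lip))) with (eps / 2) in W by (field; lra). lra.
Qed.

Lemma t0_fixed_point z : a <= z <= b -> phi z = 0 \/ s = 0 ->
  xi (t0 s z) z = z /\ eta (t0 s z) z = w z + s * phi z.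
Proof.
  intros Hz Hc. rewrite (t0_eq0 z Hz Hc), Hxi0, Heta0.
  split; [reflexivity |]. destruct Hc as [Hc|Hc]; rewrite Hc; ring.
Qed.

Lemma xi_t0_onto y : a <= y <= b -> exists x, a <= x <= b /\ xi (t0 s x) x = y.
Proof.
  intros Hy. destruct phi_endpoints as [Hpa Hpb].
  destruct (Req_dec s 0) as [hs|hs].
  { exists y. split; auto. apply t0_fixed_point; auto. }
  assert (Hga : xi (t0 s a) a = a) by (apply t0_fixed_point; auto; lra).
  assert (Hgb : xi (t0 s b) b = b) by (apply t0_fixed_point; auto; lra).
  destruct (IVT_continuous_on (fun x => xi (t0 s x) x - y) a b) as [x [Hx Hgx]]; try lra.
  { intros t Ht e He. destruct (xi_t0_continuous ltac:(lra) t Ht e He) as [d [Hd Hclose]].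
    exists d; split; auto. intros t' Ht' Hdt.
    replace (xi (t0 s t') t' - y - (xi (t0 s t) t - y)) with
      (xi (t0 s t') t' - xi (t0 s t) t) by ring. auto. }
  exists x. split; [auto | lra].
Qed.

End Estimates.

Lemma t0_graph :
  (forall x, a <= x <= b -> exists y, a <= y <= b /\
      xi (t0 s x) x = y /\ eta (t0 s x) x = w y + s * phi y) /\
  (forall y, a <= y <= b -> exists x, a <= x <= b /\
      xi (t0 s x) x = y /\ eta (t0 s x) x = w y + s * phi y).
Proof.
  destruct coefficients_bounded_lipschitz as [Mw [Lw [Mdw [Ldw [Mp [Lp [Md [Ld
    [Hw_bl [Hdw_bl [Hphi_bl Hdphi_bl]]]]]]]]]]].
  split.
  - intros x Hx. destruct (Ht0 x Hx) as [Hge [Heq _]].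
    exists (xi (t0 s x) x). split; [apply xi_in_interval; auto | split; auto].
  - intros y Hy.
    destruct (xi_t0_onto Mw Lw Mdw Ldw Mp Lp Md Ld Hw_bl Hdw_bl Hphi_bl Hdphi_bl y Hy)
      as [x [Hx Hgx]].
    exists x. split; [exact Hx | split; [exact Hgx |]].
    destruct (Ht0 x Hx) as [_ [Heq _]]. rewrite Heq, Hgx. reflexivity.
Qed.

End Flow.

Theorem theorem3p6
  (w dw d2w d3w : R -> R)
  (Hdw : forall x, derivable_pt_lim w x (dw x))
  (Hd2w : forall x, derivable_pt_lim dw x (d2w x))
  (Hd3w : forall x, derivable_pt_lim d2w x (d3w x))
  (Hd3c : forall x, continuity_pt d3w x)
  (Hper : exists T, 0 < T /\ forall x, w (x + T) = w x)
  (Hpos : forall x, -1 <= x <= 1 -> 0 < w x)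
  (a b : R) (Hab : -1 < a /\ a < b /\ b < 1)
  (phi dphi : R -> R) (coef : list R)
  (Hphi_in : forall x, a <= x <= b -> phi x = poly_eval coef x)
  (Hphi_out : forall x, (x < a \/ b < x) -> phi x = 0)
  (Hpoly_d : exists P1 P2 P3 : R -> R,
      (forall x, derivable_pt_lim (poly_eval coef) x (P1 x)) /\
      (forall x, derivable_pt_lim P1 x (P2 x)) /\
      (forall x, derivable_pt_lim P2 x (P3 x)) /\
      poly_eval coef a = 0 /\ P1 a = 0 /\ P2 a = 0 /\ P3 a = 0 /\
      poly_eval coef b = 0 /\ P1 b = 0 /\ P2 b = 0 /\ P3 b = 0)
  (Hdphi : forall x, derivable_pt_lim phi x (dphi x))
  (xi eta : R -> R -> R)
  (Hxi : forall x t, derivable_pt_lim (fun t => xi t x) t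
           (- dw (xi t x) * phi (xi t x) - (eta t x - w (xi t x)) * dphi (xi t x)))
  (Heta : forall x t, derivable_pt_lim (fun t => eta t x) t (phi (xi t x)))
  (Hxi0 : forall x, xi 0 x = x)
  (Heta0 : forall x, eta 0 x = w x)
  (t0 : R -> R -> R)
  (Ht0 : forall s x, 0 <= s <= 1 -> a <= x <= b ->
      0 <= t0 s x /\
      eta (t0 s x) x = w (xi (t0 s x) x) + s * phi (xi (t0 s x) x) /\
      (forall t, 0 <= t < t0 s x -> eta t x <> w (xi t x) + s * phi (xi t x)))
  (s : R) (Hs : 0 <= s <= 1) :
  (forall x, a <= x <= b -> exists y, a <= y <= b /\
      xi (t0 s x) x = y /\ eta (t0 s x) x = w y + s * phi y) /\
  (forall y, a <= y <= b -> exists x, a <= x <= b /\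
      xi (t0 s x) x = y /\ eta (t0 s x) x = w y + s * phi y).
Proof.
  destruct Hpoly_d as [P1 [P2 [P3 [HP1 [HP2 [HP3 [HPa [HP1a [_ [_ [HPb [HP1b _]]]]]]]]]]]].
  apply (t0_graph w dw d2w Hdw Hd2w
    (fun x => derivable_pt_lim_continuity_pt d2w d3w x (Hd3w x)) a b ltac:(lra)
    phi dphi (poly_eval coef) P1 P2 Hphi_in Hphi_out HP1 HP2
    (fun x => derivable_pt_lim_continuity_pt P2 P3 x (HP3 x)) HPa HP1a HPb HP1b Hdphi xi eta);
    auto.
Qed.
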